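(* Let $T$ be a finite rooted tree in which every inner node has at least two children, with node set $V$ and leaf set $L$. Let $S\subseteq V\setminus L$, and let $(\pi,\sigma)$ and $(\pi',\sigma')$ be two pairs of injective maps from $S$ to $L$, each identifying $S$ and having unique request. If $\pi(S)=\pi'(S)$ and $\sigma(S)=\sigma'(S)$, then $\pi=\pi'$ and $\sigma=\sigma'$.
   Context: Every node is its own ancestor and descendant. A pair $(\pi,\sigma)$ of injective maps from $S\subseteq V\setminus L$ to $L$ identifies $S$ if for each $s\in S$, $s$ is the least common ancestor of $\pi(s)$ and $\sigma(s)$. For $s\in S$, a node $x$ is $s$-requested in $(\pi,\sigma)$ if $x$ lies on the path of $T$ from $\pi(s)$ to $\sigma(s)$. The pair has unique request if every node of $T$ is $s$-requested for at most one $s\in S$. *)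

(* A finite rooted tree is given by a finite node type T,
   a root r and a parent map par (par r = r) from which every node reaches r. *)
From mathcomp Require Import all_boot.
Set Implicit Arguments. Unset Strict Implicit. Unset Printing Implicit Defensive.

Section Tree.
Variables (T : finType) (r : T) (par : T -> T).

(* rooted tree: root is fixed by par, every node reaches the root;
   this excludes cycles, so the graph {x, par x} (x != r) is a tree. *)
Definition is_rooted_tree : Prop :=
  par r = r /\ forall x : T, exists k : nat, iter k par x = r.

Definition anc (x y : T) : Prop := exists k : nat, iter k par y = x.

Definition children (v : T) : {set T} := [set x | (x != r) && (par x == v)].

Definition leaves : {set T} := [set v | children v == set0].

Definition full_branching : Prop :=
  forall v : T, v \notin leaves -> 1 < #|children v|.

Definition is_lca (c a b : T) : Prop :=
  anc c a /\ anc c b /\ forall t, anc t a -> anc t b -> anc t c.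

Definition on_path (x a b : T) : Prop :=
  exists c, is_lca c a b /\ anc c x /\ (anc x a \/ anc x b).

Definition identifying_pair (S : {set T}) (pi sigma : T -> T) : Prop :=
  [/\ {in S, forall s, pi s \in leaves},
      {in S, forall s, sigma s \in leaves},
      {in S &, injective pi},
      {in S &, injective sigma} &
      {in S, forall s, is_lca s (pi s) (sigma s)}].

Definition requested (pi sigma : T -> T) (s x : T) : Prop :=
  on_path x (pi s) (sigma s).

Definition unique_request (S : {set T}) (pi sigma : T -> T) : Prop :=
  forall x s t, s \in S -> t \in S ->
    requested pi sigma s x -> requested pi sigma t x -> s = t.

End Tree.

From mathcomp Require Import all_boot.
Set Implicit Arguments. Unset Strict Implicit.

(* Suppose pi s = pi' s' =: l.  Both s and s' are ancestors of l, hence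
   comparable; say s' lies below s.  Then s' sits on the path from pi s down
   through s to l, so it is s-requested in (pi, sigma); it is also
   s'-requested there, being the top of its own path.  Unique request forces
   s = s'.  Thus pi and pi' are matched by the identity on S, and since they
   have the same image they agree on S; sigma is handled by symmetry. *)

Section Requests.
Variables (T : finType) (par : T -> T).

Lemma anc_refl x : anc par x x.
Proof. by exists 0. Qed.

Lemma anc_total a b l : anc par a l -> anc par b l -> anc par a b \/ anc par b a.
Proof.
move=> [k <-] [m <-]; case: (leqP k m) => [le_km | /ltnW le_mk].
- by right; exists (m - k); rewrite -iterD subnK.
- by left; exists (k - m); rewrite -iterD subnK.
Qed.

Lemma is_lca_sym c a b : is_lca par c a b -> is_lca par c b a.
Proof. by move=> [ca [cb lub]]; split; [|split] => // t ta tb; apply: lub. Qed.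

Lemma requested_sym pi sigma s x :
  requested par pi sigma s x -> requested par sigma pi s x.
Proof.
by move=> [c [/is_lca_sym lca_c [cx xab]]]; exists c; split; [|split; [|tauto]].
Qed.

Lemma unique_request_sym (S : {set T}) pi sigma :
  unique_request par S pi sigma -> unique_request par S sigma pi.
Proof. by move=> U x s t sS tS /requested_sym xs /requested_sym xt; apply: (U x). Qed.

Lemma requested_below pi sigma s x :
  is_lca par s (pi s) (sigma s) -> anc par s x -> anc par x (pi s) ->
  requested par pi sigma s x.
Proof. by move=> lca_s sx xpi; exists s; split; [|split; [|left]]. Qed.

Lemma requested_self pi sigma s :
  is_lca par s (pi s) (sigma s) -> requested par pi sigma s s.
Proof. by move=> lca_s; apply: requested_below => //; [apply: anc_refl | case: lca_s]. Qed.

Lemma unique_request_fst_inj (S : {set T}) pi sigma pi' sigma' s s' :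
  {in S, forall s, is_lca par s (pi s) (sigma s)} -> unique_request par S pi sigma ->
  {in S, forall s, is_lca par s (pi' s) (sigma' s)} -> unique_request par S pi' sigma' ->
  s \in S -> s' \in S -> pi s = pi' s' -> s = s'.
Proof.
move=> lca U lca' U' sS s'S eq_pi.
have [s_pi _] := lca s sS; have [s'_pi _] := lca' s' s'S.
rewrite -eq_pi in s'_pi.
have [s_s' | s'_s] := anc_total s_pi s'_pi.
- apply: (U s') => //; last exact: requested_self (lca s' s'S).
  exact: requested_below (lca s sS) s_s' s'_pi.
- apply: (U' s) => //; first exact: requested_self (lca' s sS).
  by apply: requested_below (lca' s' s'S) s'_s _; rewrite -eq_pi.
Qed.

Lemma unique_request_snd_inj (S : {set T}) pi sigma pi' sigma' s s' :
  {in S, forall s, is_lca par s (pi s) (sigma s)} -> unique_request par S pi sigma ->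
  {in S, forall s, is_lca par s (pi' s) (sigma' s)} -> unique_request par S pi' sigma' ->
  s \in S -> s' \in S -> sigma s = sigma' s' -> s = s'.
Proof.
move=> lca /unique_request_sym U lca' /unique_request_sym U'.
by apply: unique_request_fst_inj U _ U' => t tS; apply: is_lca_sym; [apply: lca | apply: lca'].
Qed.

End Requests.

Lemma eq_in_imset_matched (T U : finType) (S : {set T}) (f g : T -> U) :
  f @: S = g @: S -> {in S &, forall s s', f s = g s' -> s = s'} -> {in S, f =1 g}.
Proof.
move=> eq_im match_fg s sS.
have /imsetP[s' s'S fs] : f s \in g @: S by rewrite -eq_im imset_f.
by rewrite fs (match_fg s s').
Qed.

Theorem lemma3p4 (T : finType) (r : T) (par : T -> T)
  (S : {set T}) (pi sigma pi' sigma' : T -> T) :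
  is_rooted_tree r par ->
  full_branching r par ->
  S \subset ~: leaves r par ->
  identifying_pair r par S pi sigma ->
  unique_request par S pi sigma ->
  identifying_pair r par S pi' sigma' ->
  unique_request par S pi' sigma' ->
  pi @: S = pi' @: S ->
  sigma @: S = sigma' @: S ->
  {in S, pi =1 pi'} /\ {in S, sigma =1 sigma'}.
Proof.
move=> _ _ _ [_ _ _ _ lca] U [_ _ _ _ lca'] U' eq_pi eq_sigma; split.
- by apply: eq_in_imset_matched eq_pi _ => s s'; apply: unique_request_fst_inj U lca' U'.
- by apply: eq_in_imset_matched eq_sigma _ => s s'; apply: unique_request_snd_inj U lca' U'.
Qed.
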